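(* Let $L$ be a Hausdorff co-Heyting algebra and let $(L',d')$ be the completion of the metric space $(L,\operatorname{dist}_L)$, with the operations $0,1,\vee,\wedge,-$ extended to $L'$ by continuity. Then $L'$ is a Hausdorff co-Heyting algebra and $d'$ is exactly the codimetric metric $\operatorname{dist}_{L'}$. Moreover, for every positive integer $d$, the inclusion $L\subseteq L'$ induces an isomorphism $L/dL\cong L'/dL'$; that is, the canonical projection $L\to L/dL$ is the restriction to $L$ of the canonical projection $L'\to L'/dL'$ under this identification.
   Context: A co-Heyting algebra is a bounded distributive lattice $(L,0,1,\vee,\wedge)$ such that $a-b=\min\{c\in L: a\le b\vee c\}$ exists for all $a,b$. Let $a\triangle b=(a-b)\vee(b-a)$; for an ideal $I$, $L/I$ is the quotient by $a\equiv_I b\iff a\triangle b\in I$. $\operatorname{Spec}L$ is the set of prime filters ordered by inclusion; height = foundation rank there; $\operatorname{codim}_La=\min\{\operatorname{height}\mathfrak p: a\in\mathfrak p\}$ ($+\infty$ if none); $dL=\{a:\operatorname{codim}_La\ge d\}$ is an ideal. The codimetric pseudometric is $\operatorname{dist}_L(a,b)=2^{-\operatorname{codim}_L(a\triangle b)}$ if finite and $0$ otherwise; the operations $\vee,\wedge,-$ are $1$-Lipschitz for it, hence extend uniquely continuously to the completion. $L$ is Hausdorff if every nonzero element has finite codimension (equivalently $\operatorname{dist}_L$ is a metric). *)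

From Stdlib Require Import Reals Lra Lia ClassicalEpsilon.
Open Scope R_scope.

Set Implicit Arguments.

Record coHOps (T : Type) := CoHOps {
  czero : T; cone : T;
  cjoin : T -> T -> T; cmeet : T -> T -> T;
  csub : T -> T -> T
}.

Section CoHeyting.
Variables (T : Type) (o : coHOps T).

Local Notation "0'" := (czero o).
Local Notation "1'" := (cone o).
Local Notation "a \v b" := (cjoin o a b) (at level 50, left associativity).
Local Notation "a \^ b" := (cmeet o a b) (at level 40, left associativity).

Definition cle (a b : T) : Prop := a \v b = b.

Definition is_bdl : Prop :=
  (forall a b c, a \v (b \v c) = (a \v b) \v c) /\
  (forall a b c, a \^ (b \^ c) = (a \^ b) \^ c) /\
  (forall a b, a \v b = b \v a) /\
  (forall a b, a \^ b = b \^ a) /\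
  (forall a b, a \v (a \^ b) = a) /\
  (forall a b, a \^ (a \v b) = a) /\
  (forall a b c, a \^ (b \v c) = (a \^ b) \v (a \^ c)) /\
  (forall a, a \v 0' = a) /\
  (forall a, a \^ 1' = a).

Definition is_coHeyting : Prop :=
  is_bdl /\
  forall a b, cle a (b \v csub o a b) /\
              forall c, cle a (b \v c) -> cle (csub o a b) c.

Definition symdiff (a b : T) : T := csub o a b \v csub o b a.

(** Prime filters (elements of Spec L), as predicates on T. *)
Definition prime_filter (F : T -> Prop) : Prop :=
  F 1' /\ ~ F 0' /\
  (forall a b, F a -> cle a b -> F b) /\
  (forall a b, F a -> F b -> F (a \^ b)) /\
  (forall a b, F (a \v b) -> F a \/ F b).

Definition strict_sub (F G : T -> Prop) : Prop :=
  (forall x, F x -> G x) /\ exists x, G x /\ ~ F x.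

(** height p >= n (height = foundation rank in Spec L, ordered by inclusion):
    for finite n, rank(p) >= n+1 iff some prime q strictly below p has rank >= n. *)
Fixpoint heightGe (p : T -> Prop) (n : nat) : Prop :=
  match n with
  | O => True
  | S m => exists q, prime_filter q /\ strict_sub q p /\ heightGe q m
  end.

(** codim a >= n  iff every prime filter containing a has height >= n
    (codim = min of heights, +oo if no prime filter contains a). *)
Definition codimGe (a : T) (n : nat) : Prop :=
  forall p, prime_filter p -> p a -> heightGe p n.

Definition dIdeal (d : nat) (a : T) : Prop := codimGe a d.

Definition codim_is (a : T) (n : nat) : Prop := codimGe a n /\ ~ codimGe a (S n).

Definition hausdorff : Prop := forall a, a <> 0' -> exists n, codim_is a n.

Definition codist (a b : T) : R :=
  match excluded_middle_informative (exists n, codim_is (symdiff a b) n) with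
  | left _ => / 2 ^ (epsilon (inhabits 0%nat) (fun n => codim_is (symdiff a b) n))
  | right _ => 0
  end.

End CoHeyting.

Definition is_metric (T : Type) (d : T -> T -> R) : Prop :=
  (forall x y, 0 <= d x y) /\
  (forall x y, d x y = 0 <-> x = y) /\
  (forall x y, d x y = d y x) /\
  (forall x y z, d x z <= d x y + d y z).

Definition cauchy_seq (T : Type) (d : T -> T -> R) (u : nat -> T) : Prop :=
  forall eps, 0 < eps -> exists N, forall m n, (N <= m)%nat -> (N <= n)%nat ->
    d (u m) (u n) < eps.

Definition seq_converges_to (T : Type) (d : T -> T -> R) (u : nat -> T) (x : T) : Prop :=
  forall eps, 0 < eps -> exists N, forall n, (N <= n)%nat -> d (u n) x < eps.

Definition complete_metric (T : Type) (d : T -> T -> R) : Prop :=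
  forall u, cauchy_seq d u -> exists x, seq_converges_to d u x.

Definition continuous2 (T : Type) (d : T -> T -> R) (f : T -> T -> T) : Prop :=
  forall x y eps, 0 < eps -> exists delta, 0 < delta /\
    forall x' y', d x x' < delta -> d y y' < delta -> d (f x y) (f x' y') < eps.

Definition is_completion (L L' : Type) (dist : L -> L -> R)
    (d' : L' -> L' -> R) (i : L -> L') : Prop :=
  is_metric d' /\ complete_metric d' /\
  (forall a b, d' (i a) (i b) = dist a b) /\
  (forall x eps, 0 < eps -> exists a, d' x (i a) < eps).

Definition extends_by_continuity (L L' : Type) (o : coHOps L) (o' : coHOps L')
    (d' : L' -> L' -> R) (i : L -> L') : Prop :=
  czero o' = i (czero o) /\ cone o' = i (cone o) /\
  (forall a b, cjoin o' (i a) (i b) = i (cjoin o a b)) /\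
  (forall a b, cmeet o' (i a) (i b) = i (cmeet o a b)) /\
  (forall a b, csub o' (i a) (i b) = i (csub o a b)) /\
  continuous2 d' (cjoin o') /\ continuous2 d' (cmeet o') /\ continuous2 d' (csub o').

(* The codimension of an element has an algebraic description: codim c >= k+1 iff
   c <= g - c for some g with codim g >= k.  One direction produces, from a prime
   filter containing c, a smaller one containing g but not c; the converse needs a
   maximal ideal argument and the fact that such witnesses can be joined.  This
   description only involves finitely many lattice operations, and the co-Heyting
   identities themselves are equational, so both pass to the completion by density
   and continuity.  Writing N x = d'(x, 0), one obtains in L' that codim x >= k iff
   N x <= 2^-k (approximate x by elements of L whose successive differences have
   rapidly growing codimension and take the limit of the joined witnesses).  Since
   d'(x, y) = N(x - y v y - x), the metric d' is the codimetric one, L' is Hausdorff,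
   and d(a, b) <= 2^-d means the same in L and in L'; density of L gives
   surjectivity of L/dL -> L'/dL'. *)

From Stdlib Require Import Reals Lra Lia ClassicalEpsilon.
From mathcomp Require ssreflect classical_sets boolp.
Open Scope R_scope.

Set Implicit Arguments.
Unset Strict Implicit.

Module ZornSubsets.
Import ssreflect classical_sets boolp.
Local Open Scope classical_set_scope.

(* [Zorn_bigcup] also asks for the union of the empty chain, hence the detour through [A = set0 \/ adm A]. *)
Lemma zorn_subsets (T : Type) (adm : (T -> Prop) -> Prop) (A0 : T -> Prop) :
  adm A0 -> (exists t, A0 t) ->
  (forall C : (T -> Prop) -> Prop, (forall X, C X -> adm X) ->
     (forall X Y, C X -> C Y -> (forall t, X t -> Y t) \/ (forall t, Y t -> X t)) ->
     (exists X, C X) -> adm (fun t => exists X, C X /\ X t)) ->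
  exists M, adm M /\ forall Y, adm Y -> (forall t, M t -> Y t) -> forall t, Y t -> M t.
Proof.
move=> hA0 [t0 A0t0] hC.
pose P := fun A : set T => A = set0 \/ adm A.
have [A [PA Amax]] : exists A, P A /\ forall B, A `<` B -> ~ P B.
  apply: Zorn_bigcup => F FP Ftot.
  have [[X [FX Xne]] | nF] := pselect (exists X, F X /\ X !=set0); last first.
    left; apply/seteqP; split => t; last by case.
    by case=> Y FY Yt; exfalso; apply: nF; exists Y; split => //; exists t.
  right; pose C := fun X => F X /\ X !=set0.
  have -> : \bigcup_(X in F) X = (fun t => exists X, C X /\ X t).
    apply/seteqP; split => t; last by case=> Y [[FY _] Yt]; exists Y.
    by case=> Y FY Yt; exists Y; split => //; split => //; exists t.
  apply: hC; last by exists X.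
    by move=> Y [FY [y Yy]]; case: (FP _ FY) => // Y0; rewrite Y0 in Yy.
  by move=> Y Z [FY _] [FZ _]; case: (Ftot _ _ FY FZ) => h; [left|right]; exact: h.
have adA : adm A.
  case: PA => // A0e; exfalso; apply: (Amax A0); last by right.
  by rewrite A0e; split => // h; exact: (h t0 A0t0).
exists A; split => // Y aY AY t Yt; apply: contrapT => nAt.
apply: (Amax Y); last by right.
by split; [exact: AY | move=> YA; exact: nAt (YA t Yt)].
Qed.

End ZornSubsets.
Import ZornSubsets.

(** * Co-Heyting algebras *)

Section CoHeytingAlgebra.
Variables (T : Type) (o : coHOps T).
Hypothesis H : is_coHeyting o.

Local Notation "0'" := (czero o).
Local Notation "1'" := (cone o).
Local Notation "a \v b" := (cjoin o a b) (at level 50, left associativity).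
Local Notation "a \^ b" := (cmeet o a b) (at level 40, left associativity).
Local Notation "a -- b" := (csub o a b) (at level 45, left associativity).
Local Notation le := (cle o).

Lemma joinA a b c : a \v (b \v c) = (a \v b) \v c. Proof. apply H. Qed.
Lemma meetA a b c : a \^ (b \^ c) = (a \^ b) \^ c. Proof. apply H. Qed.
Lemma joinC a b : a \v b = b \v a. Proof. apply H. Qed.
Lemma meetC a b : a \^ b = b \^ a. Proof. apply H. Qed.
Lemma joinKI a b : a \v (a \^ b) = a. Proof. apply H. Qed.
Lemma meetKU a b : a \^ (a \v b) = a. Proof. apply H. Qed.
Lemma meetUr a b c : a \^ (b \v c) = (a \^ b) \v (a \^ c). Proof. apply H. Qed.
Lemma joinx0 a : a \v 0' = a. Proof. apply H. Qed.
Lemma meetx1 a : a \^ 1' = a. Proof. apply H. Qed.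

Lemma joinxx a : a \v a = a.
Proof. rewrite <- (meetKU a a) at 2. apply joinKI. Qed.
Lemma meetxx a : a \^ a = a.
Proof. rewrite <- (joinKI a a) at 2. apply meetKU. Qed.

Lemma le_refl a : le a a. Proof. apply joinxx. Qed.
Lemma le_trans a b c : le a b -> le b c -> le a c.
Proof. unfold cle; intros h1 h2. rewrite <- h2, joinA, h1. reflexivity. Qed.
Lemma le_anti a b : le a b -> le b a -> a = b.
Proof. unfold cle; intros h1 h2. rewrite <- h1, joinC. exact (eq_sym h2). Qed.
Lemma leEmeet a b : le a b <-> a \^ b = a.
Proof.
unfold cle; split; intros h.
- rewrite <- h. apply meetKU.
- rewrite <- h, joinC, meetC. apply joinKI.
Qed.

Lemma le_joinl a b : le a (a \v b).
Proof. unfold cle. rewrite joinA, joinxx. reflexivity. Qed.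
Lemma le_joinr a b : le b (a \v b).
Proof. rewrite joinC. apply le_joinl. Qed.
Lemma join_lub a b c : le a c -> le b c -> le (a \v b) c.
Proof. unfold cle; intros h1 h2. rewrite <- joinA, h2, h1. reflexivity. Qed.
Lemma le_meetl a b : le (a \^ b) a.
Proof. apply leEmeet. rewrite meetC, meetA, meetxx. reflexivity. Qed.
Lemma le_meetr a b : le (a \^ b) b.
Proof. rewrite meetC. apply le_meetl. Qed.
Lemma meet_glb a b c : le c a -> le c b -> le c (a \^ b).
Proof. rewrite !leEmeet; intros h1 h2. rewrite meetA, h1, h2. reflexivity. Qed.
Lemma le0x a : le 0' a.
Proof. unfold cle. rewrite joinC. apply joinx0. Qed.
Lemma lex1 a : le a 1'.
Proof. unfold cle. rewrite joinC, <- (meetx1 a), meetC. apply joinKI. Qed.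
Lemma le_eq0 a : le a 0' -> a = 0'.
Proof. intros h. apply le_anti; auto using le0x. Qed.

Lemma join_mono a b a' b' : le a a' -> le b b' -> le (a \v b) (a' \v b').
Proof.
intros h1 h2. apply join_lub.
- apply le_trans with a'; [exact h1|apply le_joinl].
- apply le_trans with b'; [exact h2|apply le_joinr].
Qed.
Lemma meet_mono a b a' b' : le a a' -> le b b' -> le (a \^ b) (a' \^ b').
Proof.
intros h1 h2. apply meet_glb.
- apply le_trans with a; [apply le_meetl|exact h1].
- apply le_trans with b; [apply le_meetr|exact h2].
Qed.

Lemma le_subLR a b c : le (a -- b) c <-> le a (b \v c).
Proof.
split; intros h.
- apply le_trans with (b \v (a -- b)); [apply H|]. apply join_mono; auto using le_refl.
- apply H, h.
Qed.
Lemma le_join_sub a b : le a (b \v (a -- b)). Proof. apply H. Qed.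
Lemma le_sub2r a a' b : le a a' -> le (a -- b) (a' -- b).
Proof. intros h; apply le_subLR. apply le_trans with a'; [exact h|apply le_join_sub]. Qed.
Lemma le_sub2l a b b' : le b b' -> le (a -- b') (a -- b).
Proof.
intros h; apply le_subLR. apply le_trans with (b \v (a -- b)); [apply le_join_sub|].
apply join_mono; [exact h|apply le_refl].
Qed.
Lemma le_subl a b : le (a -- b) a.
Proof. apply le_subLR, le_joinr. Qed.
Lemma subUl x y z : (x \v y) -- z = (x -- z) \v (y -- z).
Proof.
apply le_anti.
- apply le_subLR, join_lub.
  + apply le_trans with (z \v (x -- z)); [apply le_join_sub|].
    apply join_mono; [apply le_refl|apply le_joinl].
  + apply le_trans with (z \v (y -- z)); [apply le_join_sub|].
    apply join_mono; [apply le_refl|apply le_joinr].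
- apply join_lub; apply le_sub2r; auto using le_joinl, le_joinr.
Qed.
Lemma subxx x : x -- x = 0'.
Proof. apply le_eq0, le_subLR. rewrite joinx0. apply le_refl. Qed.
Lemma subx0 x : x -- 0' = x.
Proof.
apply le_anti; [apply le_subl|].
apply le_trans with (0' \v (x -- 0')); [apply le_join_sub|]. rewrite joinC, joinx0. apply le_refl.
Qed.
Lemma sub0x x : 0' -- x = 0'.
Proof. apply le_eq0, le_subl. Qed.
Lemma sub_eq0 a b : le a b -> a -- b = 0'.
Proof. intros h. apply le_eq0, le_subLR. rewrite joinx0. exact h. Qed.

Lemma symdiffx0 c : symdiff o c 0' = c.
Proof. unfold symdiff. rewrite subx0, sub0x, joinx0. reflexivity. Qed.

(** * Prime filters *)

Definition ideal (J : T -> Prop) : Prop :=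
  J 0' /\ (forall x y, J y -> le x y -> J x) /\ (forall x y, J x -> J y -> J (x \v y)).
Definition filter (F : T -> Prop) : Prop :=
  F 1' /\ (forall x y, F x -> le x y -> F y) /\ (forall x y, F x -> F y -> F (x \^ y)).

Lemma ideal_le y : ideal (fun z => le z y).
Proof.
split; [apply le0x|split].
- intros a b h1 h2. exact (le_trans h2 h1).
- intros a b h1 h2. apply join_lub; auto.
Qed.
Lemma filter_ge x : filter (fun z => le x z).
Proof.
split; [apply lex1|split].
- intros a b h1 h2. exact (le_trans h1 h2).
- intros a b h1 h2. apply meet_glb; auto.
Qed.

Section OnePrime.
Variable p : T -> Prop.
Hypothesis hp : prime_filter o p.

Lemma pf_up x y : p x -> le x y -> p y. Proof. apply hp. Qed.
Lemma pf_meet x y : p x -> p y -> p (x \^ y). Proof. apply hp. Qed.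
Lemma pf_join x y : p (x \v y) -> p x \/ p y. Proof. apply hp. Qed.
Lemma pf_one : p 1'. Proof. apply hp. Qed.
Lemma pf_zero : ~ p 0'. Proof. apply hp. Qed.

Lemma pf_sub g s : p g -> ~ p s -> p (g -- s).
Proof.
intros pg ns. destruct (@pf_join s (g -- s)) as [h|h]; [|contradiction|exact h].
apply pf_up with g; [exact pg|apply le_join_sub].
Qed.

Lemma ideal_compl : ideal (fun x => ~ p x).
Proof.
split; [exact pf_zero|split].
- intros x y ny hxy px. exact (ny (pf_up px hxy)).
- intros x y nx ny pxy. destruct (pf_join pxy); auto.
Qed.

End OnePrime.

(* Otherwise the ideal generated by [J] and [x] would be a larger ideal disjoint from [F]. *)
Lemma max_ideal_extend (F J : T -> Prop) : filter F -> ideal J ->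
  (forall K, ideal K -> (forall x, J x -> K x) -> (forall x, F x -> K x -> False) ->
     forall x, K x -> J x) ->
  forall x, ~ J x -> exists f j, F f /\ J j /\ le f (j \v x).
Proof.
intros hF [J0 [Jdown Jjoin]] hmax x nJx. apply NNPP. intros hno.
set (K := fun z => exists j, J j /\ le z (j \v x)).
apply nJx, (hmax K).
- split; [|split].
  + exists 0'. split; [exact J0|apply le0x].
  + intros a b [j [Jj hb]] hab. exists j. split; [exact Jj|exact (le_trans hab hb)].
  + intros a b [j [Jj ha]] [j' [Jj' hb]]. exists (j \v j'). split; [auto|].
    apply join_lub.
    * apply (le_trans ha). apply join_mono; [apply le_joinl|apply le_refl].
    * apply (le_trans hb). apply join_mono; [apply le_joinr|apply le_refl].
- intros z Jz. exists z. split; [exact Jz|apply le_joinl].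
- intros f Ff [j [Jj hf]]. apply hno. exists f, j. auto.
- exists 0'. split; [exact J0|]. rewrite joinC, joinx0. apply le_refl.
Qed.

Lemma max_disjoint_ideal (F I : T -> Prop) : filter F -> ideal I ->
  (forall x, F x -> I x -> False) ->
  exists J, ideal J /\ (forall x, I x -> J x) /\ (forall x, F x -> J x -> False) /\
   prime_filter o (fun x => ~ J x) /\
   (forall K, ideal K -> (forall x, J x -> K x) -> (forall x, F x -> K x -> False) ->
      forall x, K x -> J x).
Proof.
intros hF hI hdis.
set (adm := fun K => ideal K /\ (forall x, I x -> K x) /\ (forall x, F x -> K x -> False)).
destruct (@zorn_subsets _ adm I) as [J [[hJ [hIJ hJF]] hmax]].
- split; [exact hI|split; [auto|exact hdis]].
- exists 0'. apply hI.
- intros C hC hch [X0 CX0]. split; [split; [|split]|split].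
  + exists X0. split; [exact CX0|exact (proj1 (proj1 (hC X0 CX0)))].
  + intros x y [X [CX Xy]] hxy. exists X. split; [exact CX|].
    destruct (hC X CX) as [[_ [Xd _]] _]. eauto.
  + intros x y [X [CX Xx]] [Y [CY Yy]]. destruct (hch X Y CX CY) as [h|h].
    * exists Y. split; [exact CY|]. destruct (hC Y CY) as [[_ [_ Yj]] _]. auto.
    * exists X. split; [exact CX|]. destruct (hC X CX) as [[_ [_ Xj]] _]. auto.
  + intros x Ix. exists X0. split; [exact CX0|exact (proj1 (proj2 (hC X0 CX0)) x Ix)].
  + intros x Fx [X [CX Xx]]. exact (proj2 (proj2 (hC X CX)) x Fx Xx).
- assert (hmax' : forall K, ideal K -> (forall x, J x -> K x) ->
    (forall x, F x -> K x -> False) -> forall x, K x -> J x).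
  { intros K hK hJK hKF. apply hmax; [split; [exact hK|split; auto]|exact hJK]. }
  exists J. do 4 (split; [auto|]); [|exact hmax'].
  pose proof (extend := max_ideal_extend hF hJ hmax').
  destruct hJ as [J0 [Jdown Jjoin]]. destruct hF as [F1 [Fup Fmeet]].
  split; [|split; [|split; [|split]]].
  + intros J1. exact (hJF 1' F1 J1).
  + intros h; exact (h J0).
  + intros x y nJx hxy Jy. exact (nJx (Jdown x y Jy hxy)).
  + intros x y nJx nJy Jxy.
    destruct (extend x nJx) as [f [j [Ff [Jj hf]]]].
    destruct (extend y nJy) as [f' [j' [Ff' [Jj' hf']]]].
    apply (hJF (f \^ f')); [apply Fmeet; auto|].
    apply Jdown with ((j \v j') \v (x \^ y)); [apply Jjoin; auto|].
    apply (le_trans (meet_mono hf hf')).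
    rewrite meetUr. apply join_lub.
    * apply (le_trans (le_meetr _ _)).
      apply (le_trans (le_joinr j j')), le_joinl.
    * rewrite meetC, meetUr. apply join_lub.
      -- apply (le_trans (le_meetr _ _)).
         apply (le_trans (le_joinl j j')), le_joinl.
      -- rewrite meetC. apply le_joinr.
  + intros x y nJ. apply NNPP. intros hn. apply nJ.
    apply Jjoin; apply NNPP; intros h; apply hn; auto.
Qed.

Lemma le_of_primes x y : (forall p, prime_filter o p -> p x -> p y) -> le x y.
Proof.
intros h. apply NNPP. intros nle.
destruct (max_disjoint_ideal (filter_ge x) (ideal_le y)) as [J [_ [hIJ [hJF [hp _]]]]].
- intros z h1 h2. exact (nle (le_trans h1 h2)).
- apply (h _ hp).
  + intros Jx. exact (hJF x (le_refl x) Jx).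
  + apply hIJ, le_refl.
Qed.

Lemma prime_below_sub p c g : prime_filter o p -> p c -> p (g -- c) ->
  exists q, prime_filter o q /\ (forall x, q x -> p x) /\ q g /\ ~ q c.
Proof.
intros hp pc pgc.
set (I := fun z => exists y, ~ p y /\ le z (c \v y)).
assert (hI : ideal I).
{ split; [|split].
  - exists 0'. split; [exact (pf_zero hp)|apply le0x].
  - intros a b [y [py hb]] hab. exists y. split; [exact py|exact (le_trans hab hb)].
  - intros a b [y [py ha]] [y' [py' hb]]. exists (y \v y'). split.
    + exact (proj2 (proj2 (ideal_compl hp)) y y' py py').
    + apply join_lub.
      * apply (le_trans ha). apply join_mono; [apply le_refl|apply le_joinl].
      * apply (le_trans hb). apply join_mono; [apply le_refl|apply le_joinr]. }
destruct (max_disjoint_ideal (filter_ge g) hI) as [J [_ [hIJ [hJF [hq _]]]]].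
- intros z hgz [y [py hz]]. apply py. apply (pf_up hp pgc).
  apply le_subLR. exact (le_trans hgz hz).
- exists (fun x => ~ J x). split; [exact hq|split; [|split]].
  + intros x nJx. apply NNPP. intros npx. apply nJx, hIJ. exists x.
    split; [exact npx|apply le_joinr].
  + intros Jg. exact (hJF g (le_refl g) Jg).
  + intros nJc. apply nJc, hIJ. exists 0'. split; [exact (pf_zero hp)|].
    rewrite joinx0. apply le_refl.
Qed.

(** * Codimension *)

Lemma heightGe_le p k m : (k <= m)%nat -> heightGe o p m -> heightGe o p k.
Proof.
intros hkm; revert p; induction hkm as [|m _ IH]; intros p h; [exact h|].
apply IH. clear IH. revert p h. induction m as [|m IHm]; intros p h; [exact I|].
destruct h as [q [hq [hs hh]]]. exists q. auto.
Qed.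
Lemma codimGe_le a k m : (k <= m)%nat -> codimGe o a m -> codimGe o a k.
Proof. intros hkm h p hp pa. exact (heightGe_le hkm (h p hp pa)). Qed.
Lemma codimGe_down a b k : le a b -> codimGe o b k -> codimGe o a k.
Proof. intros hab h p hp pa. exact (h p hp (pf_up hp pa hab)). Qed.
Lemma codimGe_join a b k : codimGe o a k -> codimGe o b k -> codimGe o (a \v b) k.
Proof. intros ha hb p hp pab. destruct (pf_join hp pab); auto. Qed.
Lemma codimGe0 k : codimGe o 0' k.
Proof. intros p hp p0. exfalso. exact (pf_zero hp p0). Qed.

(* Equivalent to [codimGe] ([codimGe_iff_alg]), but free of prime filters, hence transferable to the completion. *)
Fixpoint alg_codimGe (k : nat) (c : T) : Prop :=
  match k with
  | O => True
  | S k => exists g, alg_codimGe k g /\ le c (g -- c)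
  end.

Lemma alg_codimGe_le k m c : (k <= m)%nat -> alg_codimGe m c -> alg_codimGe k c.
Proof.
intros hkm; revert c; induction hkm as [|m _ IH]; intros c h; [exact h|].
apply IH. clear IH. revert c h. induction m as [|m IHm]; intros c h; [exact I|].
destruct h as [g [hg hc]]. exists g. auto.
Qed.
Lemma alg_codimGe0 k : alg_codimGe k 0'.
Proof. induction k as [|k IH]; [exact I|]. exists 0'. split; [exact IH|apply le0x]. Qed.

Lemma codimGe_step c g m : le c (g -- c) -> codimGe o g m -> codimGe o c (S m).
Proof.
intros hc hg p hp pc.
destruct (prime_below_sub hp pc (pf_up hp pc hc)) as [q [hq [hqp [qg nqc]]]].
exists q. split; [exact hq|split; [split; [exact hqp|exists c; auto]|exact (hg q hq qg)]].
Qed.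
Lemma codimGe_of_alg k c : alg_codimGe k c -> codimGe o c k.
Proof.
revert c. induction k as [|k IH]; intros c h.
- intros p _ _. exact I.
- destruct h as [g [hg hc]]. exact (codimGe_step hc (IH g hg)).
Qed.

Lemma alg_of_height k p : prime_filter o p -> heightGe o p k -> exists c, p c /\ alg_codimGe k c.
Proof.
revert p. induction k as [|k IH]; intros p hp h.
- exists 1'. split; [exact (pf_one hp)|exact I].
- destruct h as [q [hq [[hqp [b [pb nqb]]] hh]]].
  destruct (IH q hq hh) as [g [qg hg]].
  exists (b \^ (g -- b)). split.
  + exact (pf_meet hp pb (hqp _ (pf_sub hq qg nqb))).
  + exists g. split; [exact hg|].
    apply (le_trans (le_meetr _ _)), le_sub2l, le_meetl.
Qed.

(* Every prime filter containing [x \v e] contains a prime filter that contains [G] or [h] but neither [x] nor [e]. *)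
Lemma le_sub_join x e G h :
  le x (G -- x) -> le e (h -- e) -> le (x \v e) ((G \v h) -- (x \v e)).
Proof.
intros hx he. set (s := x \v e). set (t := (G \v h) -- s).
assert (escape : forall q, prime_filter o q -> ~ q s -> q G \/ q h -> q t).
{ intros q hq nqs hGh. apply (pf_sub hq); [|exact nqs].
  destruct hGh as [qa|qa]; apply (pf_up hq qa); [apply le_joinl|apply le_joinr]. }
assert (not_x : forall q, prime_filter o q -> q e -> ~ q x -> q t).
{ intros q hq qe nqx.
  destruct (prime_below_sub hq qe (pf_up hq qe he)) as [q' [hq' [hq'q [q'h nq'e]]]].
  apply hq'q, (escape q' hq'); [|right; exact q'h].
  intros qs. destruct (pf_join hq' qs) as [qx|qx]; [exact (nqx (hq'q _ qx))|exact (nq'e qx)]. }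
apply le_of_primes. intros p hp ps.
destruct (classic (p x)) as [px|npx].
- destruct (prime_below_sub hp px (pf_up hp px hx)) as [q [hq [hqp [qG nqx]]]].
  apply hqp. destruct (classic (q e)) as [qe|nqe]; [exact (not_x q hq qe nqx)|].
  apply (escape q hq); [|left; exact qG].
  intros qs. destruct (pf_join hq qs); auto.
- apply (not_x p hp); [|exact npx].
  destruct (pf_join hp ps); [contradiction|assumption].
Qed.

Lemma alg_codimGe_join k a b : alg_codimGe k a -> alg_codimGe k b -> alg_codimGe k (a \v b).
Proof.
revert a b. induction k as [|k IH]; intros a b ha hb; [exact I|].
destruct ha as [g [hg ha]]. destruct hb as [g' [hg' hb]].
exists (g \v g'). split; [exact (IH _ _ hg hg')|exact (le_sub_join ha hb)].
Qed.

Lemma alg_of_codimGe k c : codimGe o c k -> alg_codimGe k c.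
Proof.
revert c. induction k as [|k IH]; intros c hc; [exact I|].
apply NNPP. intros nA.
set (I := fun y => exists g, alg_codimGe k g /\ le y (g -- c)).
assert (hI : ideal I).
{ split; [|split].
  - exists 0'. split; [apply alg_codimGe0|apply le0x].
  - intros a b [g [hg hb]] hab. exists g. split; [exact hg|exact (le_trans hab hb)].
  - intros a b [g [hg ha]] [g' [hg' hb]]. exists (g \v g').
    split; [exact (alg_codimGe_join hg hg')|].
    rewrite subUl. exact (join_mono ha hb). }
destruct (max_disjoint_ideal (filter_ge c) hI) as [J [_ [hIJ [hJF [hp hmax]]]]].
{ intros z hcz [g [hg hz]]. apply nA. exists g. split; [exact hg|exact (le_trans hcz hz)]. }
destruct (hc _ hp (fun Jc => hJF c (le_refl c) Jc)) as [q [hq [[hqp [b [pb nqb]]] hh]]].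
destruct (alg_of_height hq hh) as [g [qg hg]].
(* maximality of [J] forces the prime [q] strictly below [~ J] to miss [c] *)
assert (nqc : ~ q c).
{ intros qc. apply pb, (hmax (fun x => ~ q x) (ideal_compl hq)).
  - intros x Jx qx. exact (hqp x qx Jx).
  - intros x hcx qx. exact (qx (pf_up hq qc hcx)).
  - exact nqb. }
apply (hqp _ (pf_sub hq qg nqc)), hIJ. exists g. split; [exact hg|apply le_refl].
Qed.

Lemma codimGe_iff_alg k c : codimGe o c k <-> alg_codimGe k c.
Proof. split; [apply alg_of_codimGe|apply codimGe_of_alg]. Qed.

(* [G n] accumulates the witnesses of [a 0] and of the increments [a (S m) -- a m], [m < n]. *)
Lemma alg_witness_seq k (a : nat -> T) :
  codimGe o (a O) (S k) -> (forall n, codimGe o (a (S n) -- a n) (S (S (n + k)))) ->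
  exists G : nat -> T, (forall n, alg_codimGe k (G n) /\ le (a n) (G n -- a n)) /\
    (forall n m, (n <= m)%nat -> le (G n) (G m) /\ codimGe o (G m -- G n) (S (n + k))).
Proof.
intros ha0 hinc.
destruct (alg_of_codimGe ha0) as [g0 hg0].
destruct (choice (fun n h => alg_codimGe (S (n + k)) h /\
                            le (a (S n) -- a n) (h -- (a (S n) -- a n)))) as [h hh].
{ intros n. exact (alg_of_codimGe (hinc n)). }
exists (fun n => nat_rect (fun _ => T) g0 (fun m acc => acc \v h m) n). split.
- induction n as [|n [IH1 IH2]]; [exact hg0|]. simpl. split.
  + apply (alg_codimGe_join IH1), (alg_codimGe_le (m := S (n + k))); [lia|apply hh].
  + apply (le_trans (le_join_sub (a (S n)) (a n))).
    apply (le_trans (le_sub_join IH2 (proj2 (hh n)))).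
    apply le_sub2l, le_join_sub.
- intros n m hnm. induction hnm as [|m hnm [IH1 IH2]].
  + rewrite subxx. split; [apply le_refl|apply codimGe0].
  + simpl. split; [exact (le_trans IH1 (le_joinl _ _))|].
    rewrite subUl. apply (codimGe_join IH2).
    apply (codimGe_down (le_subl _ _)), (codimGe_le (m := S (m + k))); [lia|].
    apply codimGe_of_alg, hh.
Qed.

End CoHeytingAlgebra.

(** * The codimetric distance *)

Lemma pow2_pos n : 0 < 2 ^ n.
Proof. apply pow_lt. lra. Qed.
Lemma inv_pow2_pos n : 0 < / 2 ^ n.
Proof. apply Rinv_0_lt_compat, pow2_pos. Qed.
Lemma inv_pow2_le n m : (n <= m)%nat -> / 2 ^ m <= / 2 ^ n.
Proof. intros h. apply Rinv_le_contravar; [apply pow2_pos|apply Rle_pow; [lra|exact h]]. Qed.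
Lemma inv_pow2_S n : / 2 ^ (S n) = / 2 ^ n / 2.
Proof. simpl. field. apply Rgt_not_eq, pow2_pos. Qed.
Lemma inv_pow2_small eps : 0 < eps -> exists N, / 2 ^ N < eps.
Proof.
intros he. destruct (archimed_cor1 eps he) as [N [hN hN0]].
exists N. apply Rlt_trans with (/ INR N); [|exact hN].
apply Rinv_lt_contravar; [apply Rmult_lt_0_compat; [apply lt_0_INR; exact hN0|apply pow2_pos]|].
clear. induction N as [|N IH]; [simpl; lra|]. rewrite S_INR.
replace (2 ^ S N) with (2 * 2 ^ N) by reflexivity.
assert (1 <= 2 ^ N) by (apply pow_R1_Rle; lra). lra.
Qed.

Section CodimetricDistance.
Variables (T : Type) (o : coHOps T).

Lemma codim_is_of_not_codimGe c k : ~ codimGe o c k -> exists n, codim_is o c n.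
Proof.
induction k as [|k IH]; intros h.
- exfalso. apply h. intros p _ _. exact I.
- destruct (classic (codimGe o c k)) as [hk|hk]; [exists k; split; auto|exact (IH hk)].
Qed.

Lemma codist_cases a b :
  (codist o a b = 0 /\ forall k, codimGe o (symdiff o a b) k) \/
  (exists n, codist o a b = / 2 ^ n /\ codim_is o (symdiff o a b) n).
Proof.
unfold codist. destruct (excluded_middle_informative _) as [e|ne].
- right. eexists. split; [reflexivity|exact (epsilon_spec (inhabits 0%nat) _ e)].
- left. split; [reflexivity|]. intros k. apply NNPP. intros hk.
  exact (ne (codim_is_of_not_codimGe hk)).
Qed.

Lemma codist_le_iff a b k : codist o a b <= / 2 ^ k <-> codimGe o (symdiff o a b) k.
Proof.
destruct (codist_cases a b) as [[-> hall]|[n [-> [h1 h2]]]].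
- split; [auto|]. intros _. left; apply inv_pow2_pos.
- split; intros h.
  + destruct (Compare_dec.le_lt_dec k n) as [l|l]; [exact (codimGe_le l h1)|].
    exfalso. assert (/ 2 ^ k <= / 2 ^ (S n)) by (apply inv_pow2_le; lia).
    rewrite inv_pow2_S in *. pose proof (inv_pow2_pos n). lra.
  + apply inv_pow2_le. destruct (Compare_dec.le_lt_dec k n) as [l|l]; [exact l|].
    exfalso. apply h2. apply (codimGe_le (m := k)); [lia|exact h].
Qed.

(* The values of [codist] are [0] and powers of [1/2], so a strict bound by [2 / 2^k] improves to [1 / 2^k]. *)
Lemma codist_le_of_lt_twice a b k : codist o a b < 2 * / 2 ^ k -> codist o a b <= / 2 ^ k.
Proof.
destruct (codist_cases a b) as [[-> _]|[n [-> _]]].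
- intros _. left; apply inv_pow2_pos.
- intros h. apply inv_pow2_le. destruct (Compare_dec.le_lt_dec k n) as [l|l]; [exact l|].
  exfalso. pose proof (inv_pow2_le l) as e. rewrite inv_pow2_S in e. lra.
Qed.

Lemma codist_symdiff (H : is_coHeyting o) a b : codist o a b = codist o (symdiff o a b) (czero o).
Proof. unfold codist. rewrite (symdiffx0 H). reflexivity. Qed.

Lemma codimGe_iff_codist0 (H : is_coHeyting o) a k :
  codimGe o a k <-> codist o a (czero o) <= / 2 ^ k.
Proof. rewrite codist_le_iff, (symdiffx0 H). tauto. Qed.

End CodimetricDistance.

(* Equational presentation: these identities are preserved by continuous extension, unlike the order-theoretic definition. *)
Lemma coHeyting_of_identities (T : Type) (o : coHOps T) : is_bdl o ->
  (forall a b, cjoin o a (cjoin o b (csub o a b)) = cjoin o b (csub o a b)) ->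
  (forall x y z, csub o (cjoin o x y) z = cjoin o (csub o x z) (csub o y z)) ->
  (forall x y, cjoin o (csub o x y) x = x) ->
  (forall x, csub o x x = czero o) -> is_coHeyting o.
Proof.
intros hb E0 E1 E2 E3. split; [exact hb|].
destruct hb as [jA [_ [jC [_ [_ [_ [_ [j0 _]]]]]]]].
intros a b. split; [apply E0|]. intros c hc. unfold cle in *.
assert (e1 : csub o (cjoin o b c) b = csub o c b).
{ rewrite E1, E3, jC, j0. reflexivity. }
assert (e2 : cjoin o (csub o a b) (csub o c b) = csub o c b).
{ rewrite <- e1, <- E1, hc. reflexivity. }
transitivity (cjoin o (csub o a b) (cjoin o (csub o c b) c)); [rewrite E2; reflexivity|].
rewrite jA, e2. apply E2.
Qed.

(** * The completion *)

Section Completion.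
Variables (L L' : Type) (o : coHOps L) (o' : coHOps L') (d' : L' -> L' -> R) (i : L -> L').
Hypothesis HL : is_coHeyting o.
Hypothesis Hc : is_completion (codist o) d' i.
Hypothesis He : extends_by_continuity o o' d' i.

Lemma dist_ge0 x y : 0 <= d' x y. Proof. apply Hc. Qed.
Lemma dist_eq0 x y : d' x y = 0 <-> x = y. Proof. apply Hc. Qed.
Lemma dist_sym x y : d' x y = d' y x. Proof. apply Hc. Qed.
Lemma dist_tri x y z : d' x z <= d' x y + d' y z. Proof. apply Hc. Qed.
Lemma dist_complete : complete_metric d'. Proof. apply Hc. Qed.
Lemma dist_i a b : d' (i a) (i b) = codist o a b. Proof. apply Hc. Qed.
Lemma dense_i x eps : 0 < eps -> exists a, d' x (i a) < eps. Proof. apply Hc. Qed.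
Lemma i_zero : czero o' = i (czero o). Proof. apply He. Qed.
Lemma i_one : cone o' = i (cone o). Proof. apply He. Qed.
Lemma i_join a b : cjoin o' (i a) (i b) = i (cjoin o a b). Proof. apply He. Qed.
Lemma i_meet a b : cmeet o' (i a) (i b) = i (cmeet o a b). Proof. apply He. Qed.
Lemma i_sub a b : csub o' (i a) (i b) = i (csub o a b). Proof. apply He. Qed.
Lemma join_cont : continuous2 d' (cjoin o'). Proof. apply He. Qed.
Lemma meet_cont : continuous2 d' (cmeet o'). Proof. apply He. Qed.
Lemma sub_cont : continuous2 d' (csub o'). Proof. apply He. Qed.

Lemma dist_xx x : d' x x = 0. Proof. apply dist_eq0. reflexivity. Qed.

Lemma i_symdiff a b : i (symdiff o a b) = symdiff o' (i a) (i b).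
Proof. unfold symdiff. rewrite !i_sub, i_join. reflexivity. Qed.

Definition continuous3 (f : L' -> L' -> L' -> L') := forall x y z eps, 0 < eps ->
  exists delta, 0 < delta /\ forall x' y' z', d' x x' < delta -> d' y y' < delta ->
    d' z z' < delta -> d' (f x y z) (f x' y' z') < eps.

Lemma continuous3_fst : continuous3 (fun x y z => x).
Proof. intros x y z eps he. exists eps. auto. Qed.
Lemma continuous3_snd : continuous3 (fun x y z => y).
Proof. intros x y z eps he. exists eps. auto. Qed.
Lemma continuous3_thd : continuous3 (fun x y z => z).
Proof. intros x y z eps he. exists eps. auto. Qed.
Lemma continuous3_cst c : continuous3 (fun x y z => c).
Proof. intros x y z eps he. exists 1. split; [lra|]. intros. rewrite dist_xx. exact he. Qed.
Lemma continuous3_op op f g : continuous2 d' op -> continuous3 f -> continuous3 g ->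
  continuous3 (fun x y z => op (f x y z) (g x y z)).
Proof.
intros hop hf hg x y z eps he.
destruct (hop (f x y z) (g x y z) eps he) as [d0 [hd0 hd]].
destruct (hf x y z d0 hd0) as [d1 [hd1 hf']].
destruct (hg x y z d0 hd0) as [d2 [hd2 hg']].
exists (Rmin d1 d2). split; [apply Rmin_glb_lt; auto|].
intros x' y' z' e1 e2 e3. apply hd.
- apply hf'; eapply Rlt_le_trans; eauto using Rmin_l.
- apply hg'; eapply Rlt_le_trans; eauto using Rmin_r.
Qed.

Ltac continuity3 := repeat first
  [ apply continuous3_fst | apply continuous3_snd | apply continuous3_thd
  | apply continuous3_cst | apply (continuous3_op join_cont)
  | apply (continuous3_op meet_cont) | apply (continuous3_op sub_cont) ].

Lemma dense_seq x k : exists a : nat -> L, forall n, d' x (i (a n)) < / 2 ^ (n + k).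
Proof.
apply (choice (fun n a => d' x (i a) < / 2 ^ (n + k))).
intros n. apply dense_i, inv_pow2_pos.
Qed.

Lemma cvg_of_rate (u : nat -> L') x k :
  (forall n, d' x (u n) < / 2 ^ (n + k)) -> seq_converges_to d' u x.
Proof.
intros h eps he. destruct (inv_pow2_small he) as [N hN]. exists N. intros n hn.
rewrite dist_sym. apply Rlt_trans with (/ 2 ^ (n + k)); [apply h|].
apply Rle_lt_trans with (/ 2 ^ N); [apply inv_pow2_le; lia|exact hN].
Qed.

Lemma cvg_continuous3 f u v w x y z : continuous3 f ->
  seq_converges_to d' u x -> seq_converges_to d' v y -> seq_converges_to d' w z ->
  seq_converges_to d' (fun n => f (u n) (v n) (w n)) (f x y z).
Proof.
intros hf hu hv hw eps he.
destruct (hf x y z eps he) as [dl [hdl hd]].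
destruct (hu dl hdl) as [N1 hN1]. destruct (hv dl hdl) as [N2 hN2].
destruct (hw dl hdl) as [N3 hN3].
exists (N1 + N2 + N3)%nat. intros n hn. rewrite dist_sym. apply hd.
- rewrite dist_sym; apply hN1; lia.
- rewrite dist_sym; apply hN2; lia.
- rewrite dist_sym; apply hN3; lia.
Qed.

Lemma cvg_unique u x y : seq_converges_to d' u x -> seq_converges_to d' u y -> x = y.
Proof.
intros hx hy. apply dist_eq0. apply Rle_antisym; [|apply dist_ge0].
apply Rnot_lt_le. intros hpos.
destruct (hx (d' x y / 2)) as [N1 hN1]; [lra|].
destruct (hy (d' x y / 2)) as [N2 hN2]; [lra|].
pose proof (hN1 (N1 + N2)%nat ltac:(lia)). pose proof (hN2 (N1 + N2)%nat ltac:(lia)).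
pose proof (dist_tri x (u (N1 + N2)%nat) y). rewrite (dist_sym x (u _)) in *. lra.
Qed.

Lemma identity_extends f g : continuous3 f -> continuous3 g ->
  (forall a b c, f (i a) (i b) (i c) = g (i a) (i b) (i c)) -> forall x y z, f x y z = g x y z.
Proof.
intros hf hg hfg x y z.
destruct (dense_seq x 0) as [a ha]. destruct (dense_seq y 0) as [b hb].
destruct (dense_seq z 0) as [c hc].
pose proof (cvg_of_rate ha) as ca. pose proof (cvg_of_rate hb) as cb.
pose proof (cvg_of_rate hc) as cc.
apply (cvg_unique (cvg_continuous3 hf ca cb cc)).
intros eps he. destruct (cvg_continuous3 hg ca cb cc he) as [N hN]. exists N.
intros n hn. rewrite hfg. exact (hN n hn).
Qed.

(* Transfers the identity [lem] of [L] to [L'], first padding the context with dummy variables so that both sides abstract to ternary functions. *)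
Ltac by_density lem :=
  intros;
  repeat lazymatch goal with
  | x : L', y : L', z : L' |- _ => fail
  | |- ?g => cut (L' -> g); [exact (fun h => h (czero o'))|intro]
  end;
  lazymatch goal with
  | x : L', y : L', z : L' |- ?l = ?r =>
    lazymatch eval pattern x, y, z in l with ?f _ _ _ =>
    lazymatch eval pattern x, y, z in r with ?g _ _ _ =>
      refine (identity_extends (f := f) (g := g) _ _ _ x y z); [continuity3|continuity3|]
    end end
  end;
  intros; rewrite ?i_zero, ?i_one; repeat rewrite ?i_join, ?i_meet, ?i_sub;
  f_equal; apply lem.

Lemma coHeyting_completion : is_coHeyting o'.
Proof.
apply coHeyting_of_identities; [repeat split|..].
- by_density (joinA HL).
- by_density (meetA HL).
- by_density (joinC HL).
- by_density (meetC HL).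
- by_density (joinKI HL).
- by_density (meetKU HL).
- by_density (meetUr HL).
- by_density (joinx0 HL).
- by_density (meetx1 HL).
- by_density (le_join_sub HL).
- by_density (subUl HL).
- by_density (le_subl HL).
- by_density (subxx HL).
Qed.

Definition norm x := d' x (czero o').

Lemma norm_i a : norm (i a) = codist o a (czero o).
Proof. unfold norm. rewrite i_zero. apply dist_i. Qed.

Lemma norm_le_dist x y : norm x <= d' x y + norm y.
Proof. apply dist_tri. Qed.

Lemma norm_le1 z : norm z <= 1.
Proof.
apply Rnot_lt_le. intros hlt.
destruct (@dense_i z (norm z - 1)) as [a ha]; [lra|].
pose proof (norm_le_dist z (i a)) as e. rewrite norm_i in e.
destruct (codist_cases o a (czero o)) as [[e0 _]|[n [e0 _]]]; rewrite e0 in e; [lra|].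
pose proof (inv_pow2_le (Nat.le_0_l n)). simpl in *. lra.
Qed.

Lemma norm_closed u x r : seq_converges_to d' u x -> (forall n, norm (u n) <= r) -> norm x <= r.
Proof.
intros hu hr. apply Rnot_lt_le. intros hlt.
destruct (hu (norm x - r)) as [N hN]; [lra|].
pose proof (hN N (le_n N)). pose proof (norm_le_dist x (u N)). pose proof (dist_sym x (u N)).
pose proof (hr N). lra.
Qed.

Lemma codimGe_of_near x a k : norm x <= / 2 ^ k -> d' x (i a) < / 2 ^ k -> codimGe o a k.
Proof.
intros hx hd. apply (codimGe_iff_codist0 HL), codist_le_of_lt_twice. rewrite <- norm_i.
pose proof (norm_le_dist (i a) x). pose proof (dist_sym x (i a)). lra.
Qed.

Lemma norm_le_of_alg k z : alg_codimGe o' k z -> norm z <= / 2 ^ k.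
Proof.
revert z. induction k as [|k IH]; intros z hz.
- simpl. rewrite Rinv_1. apply norm_le1.
- destruct hz as [g [hg hzg]].
  destruct (dense_seq z (S k)) as [a ha]. destruct (dense_seq g (S k)) as [b hb].
  set (F := fun x y (_ : L') => cmeet o' x (csub o' y x)).
  assert (hF : continuous3 F) by (unfold F; continuity3).
  pose proof (cvg_continuous3 hF (cvg_of_rate ha) (cvg_of_rate hb) (cvg_of_rate ha)) as hc.
  assert (eF : F z g z = z) by (apply (leEmeet coHeyting_completion); exact hzg).
  rewrite eF in hc. apply (norm_closed hc). intros n. unfold F.
  rewrite i_sub, i_meet, norm_i. apply (codimGe_iff_codist0 HL).
  apply (codimGe_step HL (g := b n) (m := k)).
  + apply (le_trans HL (le_meetr HL _ _)), (le_sub2l HL), (le_meetl HL).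
  + apply (codimGe_of_near (x := g)); [exact (IH g hg)|].
    apply Rlt_le_trans with (/ 2 ^ (n + S k)); [apply hb|apply inv_pow2_le; lia].
Qed.

(* Approximate [z] by [a n] with increments of codimension [>= n + k + 2]; the witnesses [G n] of [alg_witness_seq] form a Cauchy sequence whose limit witnesses [z]. *)
Lemma alg_of_norm_le k z : norm z <= / 2 ^ k -> alg_codimGe o' k z.
Proof.
revert z. induction k as [|k IH]; intros z hz; [exact I|].
destruct (dense_seq z (k + 2)) as [a ha].
destruct (alg_witness_seq HL (k := k) (a := a)) as [G [hGa hGG]].
- apply (codimGe_of_near (x := z)); [exact hz|].
  apply Rlt_le_trans with (/ 2 ^ (0 + (k + 2))); [apply ha|apply inv_pow2_le; lia].
- intros n. apply (codimGe_down (le_joinr HL (csub o (a n) (a (S n))) _)).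
  apply codist_le_iff, codist_le_of_lt_twice. rewrite <- dist_i.
  pose proof (dist_tri (i (a n)) z (i (a (S n)))). pose proof (dist_sym (i (a n)) z).
  pose proof (ha n). pose proof (ha (S n)).
  replace (S n + (k + 2))%nat with (S (S (S (n + k)))) in * by lia.
  replace (n + (k + 2))%nat with (S (S (n + k))) in * by lia.
  rewrite (inv_pow2_S (S (S (n + k)))) in *. pose proof (inv_pow2_pos (S (S (n + k)))). lra.
- assert (hGd : forall n m, (n <= m)%nat -> d' (i (G n)) (i (G m)) <= / 2 ^ (S (n + k))).
  { intros n m hnm. destruct (hGG n m hnm) as [hle hcod].
    rewrite dist_i. apply codist_le_iff. unfold symdiff. rewrite (sub_eq0 HL hle).
    apply codimGe_join; [apply codimGe0|exact hcod]. }
  assert (hcs : cauchy_seq d' (fun n => i (G n))).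
  { intros eps heps. destruct (inv_pow2_small heps) as [N hN]. exists N. intros m n hm hn.
    assert (tail : forall p q, (N <= p)%nat -> (p <= q)%nat -> d' (i (G p)) (i (G q)) < eps).
    { intros p q hp hpq. apply Rle_lt_trans with (/ 2 ^ (S (p + k))); [exact (hGd p q hpq)|].
      apply Rle_lt_trans with (/ 2 ^ N); [apply inv_pow2_le; lia|exact hN]. }
    destruct (Compare_dec.le_lt_dec m n); [auto|rewrite dist_sym; apply tail; lia]. }
  destruct (dist_complete hcs) as [G' hG'].
  exists G'. split.
  + apply IH, (norm_closed hG'). intros n. rewrite norm_i.
    apply (codimGe_iff_codist0 HL), (codimGe_of_alg HL), hGa.
  + pose proof (cvg_of_rate ha) as cz.
    set (F1 := fun x y (_ : L') => cjoin o' x (csub o' y x)).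
    set (F2 := fun (x y _ : L') => csub o' y x).
    assert (hF1 : continuous3 F1) by (unfold F1; continuity3).
    assert (hF2 : continuous3 F2) by (unfold F2; continuity3).
    change (F1 z G' z = F2 z G' z).
    apply (cvg_unique (cvg_continuous3 hF1 cz hG' cz)).
    intros eps he. destruct (cvg_continuous3 hF2 cz hG' cz he) as [N hN].
    exists N. intros n hn. unfold F1, F2 in *.
    rewrite i_sub, i_join, (proj2 (hGa n)), <- i_sub. exact (hN n hn).
Qed.

Lemma codimGe_completion_iff_norm w k : codimGe o' w k <-> norm w <= / 2 ^ k.
Proof.
rewrite (codimGe_iff_alg coHeyting_completion).
split; [apply norm_le_of_alg|apply alg_of_norm_le].
Qed.

Lemma dist_eq_norm_symdiff x y : d' x y = norm (symdiff o' x y).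
Proof.
set (S := fun x y (_ : L') => symdiff o' x y).
assert (hS : continuous3 S) by (unfold S, symdiff; continuity3).
enough (close : forall eps, 0 < eps -> Rabs (d' x y - norm (symdiff o' x y)) < eps).
{ destruct (Req_dec (d' x y - norm (symdiff o' x y)) 0) as [h|h]; [lra|].
  pose proof (close _ (Rabs_pos_lt _ h)). lra. }
intros eps he.
destruct (hS x y x (eps / 3)) as [dl [hdl hd]]; [lra|].
destruct (@dense_i x (Rmin dl (eps / 3))) as [a ha]; [apply Rmin_glb_lt; lra|].
destruct (@dense_i y (Rmin dl (eps / 3))) as [b hb]; [apply Rmin_glb_lt; lra|].
pose proof (Rmin_l dl (eps / 3)). pose proof (Rmin_r dl (eps / 3)).
assert (hab : d' (i a) (i b) = norm (symdiff o' (i a) (i b))).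
{ rewrite dist_i, (codist_symdiff HL), <- norm_i, i_symdiff. reflexivity. }
pose proof (hd (i a) (i b) (i a) ltac:(lra) ltac:(lra) ltac:(lra)) as hsd. unfold S in hsd.
pose proof (dist_tri x (i a) y). pose proof (dist_tri (i a) (i b) y).
pose proof (dist_tri (i a) x (i b)). pose proof (dist_tri x y (i b)).
pose proof (dist_sym (i a) x). pose proof (dist_sym y (i b)).
pose proof (norm_le_dist (symdiff o' x y) (symdiff o' (i a) (i b))).
pose proof (norm_le_dist (symdiff o' (i a) (i b)) (symdiff o' x y)).
pose proof (dist_sym (symdiff o' x y) (symdiff o' (i a) (i b))).
unfold Rabs; destruct Rcase_abs; lra.
Qed.

Lemma norm_of_codim_is w n : codim_is o' w n -> norm w = / 2 ^ n.
Proof.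
intros [hn hn1]. apply Rle_antisym; [exact (proj1 (codimGe_completion_iff_norm _ _) hn)|].
apply Rnot_lt_le. intros hlt.
destruct (@dense_i w (Rmin (/ 2 ^ n - norm w) (/ 2 ^ (S n)))) as [a ha].
{ apply Rmin_glb_lt; [lra|apply inv_pow2_pos]. }
pose proof (Rmin_l (/ 2 ^ n - norm w) (/ 2 ^ (S n))).
pose proof (Rmin_r (/ 2 ^ n - norm w) (/ 2 ^ (S n))).
assert (hs : codimGe o' (symdiff o' w (i a)) (S n)).
{ apply codimGe_completion_iff_norm. rewrite <- dist_eq_norm_symdiff. lra. }
assert (hia : codimGe o' (i a) (S n)).
{ apply codimGe_completion_iff_norm. rewrite norm_i. apply codist_le_of_lt_twice.
  rewrite <- norm_i, inv_pow2_S.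
  pose proof (norm_le_dist (i a) w). pose proof (dist_sym (i a) w). lra. }
apply hn1, (codimGe_down (le_join_sub coHeyting_completion w (i a))).
apply (codimGe_join hia), (codimGe_down (le_joinl coHeyting_completion _ _) hs).
Qed.

Lemma hausdorff_completion : hausdorff o'.
Proof.
intros w hw. assert (hpos : 0 < norm w).
{ destruct (dist_ge0 w (czero o')) as [h|h]; [exact h|].
  exfalso. apply hw. apply dist_eq0. auto. }
destruct (inv_pow2_small hpos) as [k hk]. apply (codim_is_of_not_codimGe (k := k)).
rewrite codimGe_completion_iff_norm. lra.
Qed.

Lemma dist_eq_codist_completion x y : d' x y = codist o' x y.
Proof.
rewrite dist_eq_norm_symdiff. destruct (codist_cases o' x y) as [[-> hall]|[n [-> hn]]].
- apply Rle_antisym; [|apply dist_ge0]. apply Rnot_lt_le. intros hp.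
  destruct (inv_pow2_small hp) as [k hk].
  pose proof (proj1 (codimGe_completion_iff_norm _ k) (hall k)). lra.
- exact (norm_of_codim_is hn).
Qed.

Lemma codimGe_symdiff_i d a b :
  codimGe o (symdiff o a b) d <-> codimGe o' (symdiff o' (i a) (i b)) d.
Proof.
rewrite <- codist_le_iff, <- dist_i, dist_eq_norm_symdiff, codimGe_completion_iff_norm.
tauto.
Qed.

Lemma exists_i_near d x : exists a, codimGe o' (symdiff o' (i a) x) d.
Proof.
destruct (dense_i x (inv_pow2_pos d)) as [a ha]. exists a.
apply codimGe_completion_iff_norm. rewrite <- dist_eq_norm_symdiff, dist_sym. lra.
Qed.

End Completion.

Theorem theorem7p1 (L L' : Type) (o : coHOps L) (o' : coHOps L')
    (d' : L' -> L' -> R) (i : L -> L') :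
  is_coHeyting o -> hausdorff o ->
  is_completion (codist o) d' i ->
  extends_by_continuity o o' d' i ->
  is_coHeyting o' /\ hausdorff o' /\
  (forall x y, d' x y = codist o' x y) /\
  (forall d : nat, (1 <= d)%nat ->
     (forall a b, dIdeal o d (symdiff o a b) <-> dIdeal o' d (symdiff o' (i a) (i b))) /\
     (forall x, exists a, dIdeal o' d (symdiff o' (i a) x))).
Proof.
intros HL _ Hc He. split; [|split; [|split]].
- exact (coHeyting_completion HL Hc He).
- exact (hausdorff_completion HL Hc He).
- exact (dist_eq_codist_completion HL Hc He).
- intros d _. split.
  + exact (codimGe_symdiff_i HL Hc He d).
  + exact (exists_i_near HL Hc He d).
Qed.
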